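(* Let $\hbar$ and $\tilde t_1,\tilde t_2,\dots$ be formal parameters, $D=x\frac{\partial}{\partial x}$, and let $$\Psi^{mm}(x,\hbar):=\sum_{j\ge0}s_{(j)}(\tilde{\mathbf t}/\hbar)\,x^j\prod_{l=1}^j\frac{1}{1-\hbar(l-1)}$$ (the first basis vector $\Phi^{mm}_1$ with $\beta=\hbar$ and $\tilde t_k\mapsto\tilde t_k/\hbar$). Then $A_{mm}\Psi^{mm}=0$, where $$A_{mm}:=\sum_{k\ge1}k\tilde t_k\,x^k\prod_{j=0}^{k-1}\frac{1}{1-\hbar(D+j)}-\hbar D$$ (the product of operators in $D$ acts first, then multiplication by $x^k$). If moreover $\tilde t_k=0$ for all $k>l$, then $\tilde A_{mm}\Psi^{mm}=0$ for the polynomial operator $$\tilde A_{mm}=\sum_{k=1}^lk\tilde t_k\hat x^k\prod_{j=1}^{l-k}(1+\hat x\hat y+\hbar j)+\hat x\hat y\prod_{j=1}^l(1+\hat x\hat y+\hbar j),\qquad \hat x=x\cdot,\ \hat y=-\hbar\frac{\partial}{\partial x}.$$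
   Context: $s_{(j)}$ is defined by $\exp(\sum_{m\ge1}t_mx^m)=\sum_{j\ge0}s_{(j)}(\mathbf t)x^j$, and $\tilde{\mathbf t}/\hbar=(\tilde t_1/\hbar,\tilde t_2/\hbar,\dots)$. All expressions are formal power series in $x$ with coefficients formal in $\hbar$ and $\tilde{\mathbf t}$; operators $f(D)$ act on $x^m$ by multiplication by $f(m)$. *)

From HB Require Import structures.
From mathcomp Require Import all_boot all_order all_algebra.
Set Implicit Arguments. Unset Strict Implicit. Unset Printing Implicit Defensive.
Import Order.TTheory GRing.Theory Num.Theory.
Local Open Scope ring_scope.

(* Formal power series in x over a field R, represented by their
   coefficient sequence: F n = coefficient of x^n. *)
Definition series (R : Type) := nat -> R.

Section Defs.
Variable R : fieldType.

(* s_(j)(t): coefficient of x^j in exp(sum_{m>=1} t_m x^m)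
   = sum_{n>=0} (sum_{m>=1} t_m x^m)^n / n!.  Since the exponent has no
   constant term, only n <= j and m <= j contribute to x^j, so the
   truncations below are exact. *)
Definition schur_row (t : nat -> R) (j : nat) : R :=
  let T : {poly R} := \sum_(1 <= m < j.+1) t m *: 'X^m in
  \sum_(n < j.+1) (T ^+ n)`_j / (n`!)%:R.

(* f(D), D = x d/dx : acts on x^m by multiplication by f m *)
Definition fD (f : nat -> R) (F : series R) : series R := fun m => f m * F m.

Definition mulXn (k : nat) (F : series R) : series R :=
  fun n => if (k <= n)%N then F (n - k)%N else 0.

Definition Psi_mm (hbar : R) (t : nat -> R) : series R :=
  fun j => schur_row (fun m => t m / hbar) j *
           \prod_(1 <= l < j.+1) (1 - hbar * (l.-1)%:R)^-1.

(* A_mm = sum_{k>=1} k t_k x^k prod_{j=0}^{k-1} 1/(1 - hbar (D+j)) - hbar D.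
   On the coefficient of x^n only the terms k <= n contribute
   (x^k raises degree by k), so the sum is truncated exactly. *)
Definition A_mm (hbar : R) (t : nat -> R) (F : series R) : series R :=
  fun n =>
    \sum_(1 <= k < n.+1)
       (k%:R * t k) *
       mulXn k (fD (fun m => \prod_(0 <= j < k) (1 - hbar * (m + j)%:R)^-1) F) n
    - hbar * fD (fun m => m%:R) F n.

Definition xhat (F : series R) : series R := mulXn 1 F.
Definition yhat (hbar : R) (F : series R) : series R :=
  fun n => - hbar * ((n.+1)%:R * F n.+1).

Definition Bop (hbar : R) (j : nat) (F : series R) : series R :=
  fun n => F n + xhat (yhat hbar F) n + hbar * j%:R * F n.

Definition opprod (ops : seq (series R -> series R)) (F : series R) : series R :=
  foldr (fun op G => op G) F ops.

Definition Atilde_mm (hbar : R) (t : nat -> R) (l : nat) (F : series R)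
  : series R :=
  fun n =>
    \sum_(1 <= k < l.+1)
       (k%:R * t k) *
       iter k xhat (opprod [seq Bop hbar j | j <- iota 1 (l - k)] F) n
    + xhat (yhat hbar (opprod [seq Bop hbar j | j <- iota 1 l] F)) n.

End Defs.

From HB Require Import structures.
From mathcomp Require Import all_boot all_order all_algebra.
From mathcomp Require Import ring.
Import Order.TTheory GRing.Theory Num.Theory.
Set Implicit Arguments. Unset Strict Implicit. Unset Printing Implicit Defensive.
Local Open Scope ring_scope.

(* Write Psi_n = s_n w_n with s_n = s_(n)(t/hbar) and
   w_n = prod_(l=1..n) (1 - hbar (l-1))^-1.  Since
   w_(n-k) * prod_(j<k) (1 - hbar (n-k+j))^-1 = w_n, the coefficient of x^n in
   A_mm Psi is w_n (sum_k k t_k s_(n-k) - hbar n s_n).  In Atilde_mm Psi every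
   term carries the same eigenvalue prod_(j=1..l) (1 - hbar n + hbar j) of the
   factors 1 + xhat yhat + hbar j, times the same bracket.  The bracket vanishes
   by the recursion n s_n(u) = sum_k k u_k s_(n-k)(u), read off from the
   derivative of exp(sum_m u_m x^m); we prove it on polynomial truncations of
   the exponential, which is where characteristic 0 enters. *)

Section TakePoly.
Variable R : nzRingType.

Lemma take_polyM m (p q : {poly R}) :
  take_poly m (p * q) = take_poly m (take_poly m p * take_poly m q).
Proof.
apply/polyP => i; rewrite !coef_take_poly; case: ifP => // im.
rewrite !coefM; apply: eq_bigr => j _.
have ji : (j <= i)%N by rewrite -ltnS.
by rewrite !coef_take_poly (leq_ltn_trans ji im) (leq_ltn_trans (leq_subr j i) im).
Qed.

Lemma take_polyX m (p : {poly R}) n :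
  take_poly m (p ^+ n) = take_poly m (take_poly m p ^+ n).
Proof.
elim: n => [|n IH] //.
rewrite exprS take_polyM IH [in RHS]exprS [in RHS]take_polyM.
by rewrite [take_poly m (take_poly m p)]take_poly_id // size_take_poly.
Qed.

Lemma coefX_lt (p : {poly R}) n i : p`_0 = 0 -> (i < n)%N -> (p ^+ n)`_i = 0.
Proof.
move=> p0 lt_in; have pXE : p = drop_poly 1 p * 'X.
  rewrite -[LHS](poly_take_drop 1) [take_poly 1 p](_ : _ = 0) ?add0r //.
  by apply/polyP => -[|j]; rewrite coef_take_poly coef0.
by rewrite pXE exprMn_comm ?coefMXn ?lt_in //; exact: commr_polyX.
Qed.
End TakePoly.

Section SchurRowRecursion.
Variable R : fieldType.
Hypothesis R_char0 : [pchar R] =i pred0.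
Variable u : nat -> R.

Definition exponent_poly (N : nat) : {poly R} := \sum_(1 <= m < N.+1) u m *: 'X^m.

Lemma coef_exponent_poly N i :
  (exponent_poly N)`_i = if (0 < i <= N)%N then u i else 0.
Proof.
rewrite /exponent_poly coef_sum.
under eq_bigr do rewrite coefZ coefXn mulr_natr mulrb eq_sym.
by rewrite -big_mkcond big_nat1_eq ltnS.
Qed.

Lemma take_exponent_poly j N :
  (j <= N)%N -> take_poly j.+1 (exponent_poly N) = exponent_poly j.
Proof.
move=> le_jN; apply/polyP => i; rewrite coef_take_poly !coef_exponent_poly ltnS.
case: (leqP i j) => [le_ij | _]; last by rewrite andbF.
by rewrite (leq_trans le_ij le_jN) !andbT.
Qed.

Lemma exponent_poly_coef0 N : (exponent_poly N)`_0 = 0.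
Proof. by rewrite coef_exponent_poly. Qed.

Definition exp_poly (N : nat) : {poly R} :=
  \sum_(m < N.+1) (m`!%:R)^-1 *: exponent_poly N ^+ m.

Lemma schur_row_exp_poly j N : (j <= N)%N -> schur_row u j = (exp_poly N)`_j.
Proof.
move=> le_jN; rewrite /schur_row -/(exponent_poly j) /exp_poly coef_sum.
have coefT m : (exponent_poly N ^+ m)`_j = (exponent_poly j ^+ m)`_j.
  have coef_take (p : {poly R}) : p`_j = (take_poly j.+1 p)`_j.
    by rewrite coef_take_poly ltnSn.
  by rewrite coef_take [in RHS]coef_take take_polyX take_exponent_poly.
rewrite (big_ord_widen N.+1 (fun n => (exponent_poly j ^+ n)`_j / n`!%:R)) //.
rewrite [RHS](bigID (fun m : 'I_N.+1 => (m < j.+1)%N)) /=.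
rewrite [X in _ = _ + X]big1 ?addr0.
  by apply: eq_bigr => m _; rewrite coefZ coefT mulrC.
move=> m; rewrite -leqNgt => lt_jm.
by rewrite coefZ coefX_lt ?mulr0 ?exponent_poly_coef0.
Qed.

Lemma invfact_mulS m : (m.+1`!%:R)^-1 * m.+1%:R = (m`!%:R)^-1 :> R.
Proof.
have /pcharf0P natr_eq0 := R_char0.
by rewrite factS natrM invfM mulrAC mulVf ?mul1r // natr_eq0.
Qed.

Lemma deriv_exp_poly N :
  (exp_poly N.+1)^`() =
  (exponent_poly N.+1)^`() * \sum_(m < N.+1) (m`!%:R)^-1 *: exponent_poly N.+1 ^+ m.
Proof.
rewrite /exp_poly raddf_sum big_ord_recl /= derivZ deriv_exp mulr0n scaler0 add0r.
rewrite mulr_sumr; apply: eq_bigr => m _.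
by rewrite derivZ deriv_exp -scaler_nat scalerA invfact_mulS scalerAr.
Qed.

Lemma schur_row_rec n :
  n%:R * schur_row u n = \sum_(1 <= k < n.+1) (k%:R * u k) * schur_row u (n - k)%N.
Proof.
case: n => [|n]; first by rewrite mul0r big_geq.
have := coef_deriv (exp_poly n.+1) n; rewrite deriv_exp_poly coefM => coef_n.
rewrite (@schur_row_exp_poly _ _ (leqnn n.+1)) mulr_natl -coef_n big_add1 /= big_mkord.
apply: eq_bigr => k _; rewrite coef_deriv coef_exponent_poly /= ltn_ord mulr_natl subSS.
have le_nk_n := leq_subr k n.
rewrite (@schur_row_exp_poly _ _ (leq_trans le_nk_n (leqnSn n))) /exp_poly.
rewrite [in RHS]big_ord_recr /= coefD coefZ coefX_lt ?exponent_poly_coef0 ?mulr0 ?addr0 //.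
Qed.

End SchurRowRecursion.

Lemma big_nat_widen_vanishing (R : nmodType) (F : nat -> R) a b :
  (a <= b)%N -> (forall k, (a < k)%N -> F k = 0) ->
  \sum_(1 <= k < a.+1) F k = \sum_(1 <= k < b.+1) F k.
Proof.
move=> le_ab F_gt; rewrite (@big_nat_widen _ _ _ 1 a.+1 b.+1) // big_mkcond /=.
by apply: eq_bigr => k _; case: ltnP => // /F_gt ->.
Qed.

Section Operators.
Variables (R : fieldType) (hbar : R).

Lemma iter_xhatE k (F : series R) n :
  iter k (@xhat R) F n = if (k <= n)%N then F (n - k)%N else 0.
Proof.
elim: k n => [|k IH] n /=; first by rewrite subn0.
rewrite {1}/xhat /mulXn; case: n => [|n] //=.
by rewrite subn1 IH ltnS subSS.
Qed.

Lemma xhat_yhatE (F : series R) n : xhat (yhat hbar F) n = - hbar * (n%:R * F n).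
Proof.
rewrite /xhat /yhat /mulXn; case: n => [|n] /=; first by rewrite mul0r mulr0.
by rewrite subn1.
Qed.

Lemma BopE j (F : series R) n :
  Bop hbar j F n = (1 - hbar * n%:R + hbar * j%:R) * F n.
Proof. by rewrite /Bop xhat_yhatE; ring. Qed.

Definition Bop_symbol (L m : nat) : R :=
  \prod_(j <- iota 1 L) (1 - hbar * m%:R + hbar * j%:R).

Lemma opprod_BopE L (F : series R) n :
  opprod [seq Bop hbar j | j <- iota 1 L] F n = Bop_symbol L n * F n.
Proof.
rewrite /Bop_symbol; elim: (iota 1 L) => [|j s IH] /=; first by rewrite big_nil mul1r.
by rewrite BopE IH big_cons mulrA.
Qed.

Definition shift_prod (k m : nat) : R := \prod_(0 <= j < k) (1 - hbar * (m + j)%:R).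

Lemma Bop_symbolD L m k : Bop_symbol (L + k) (m + k) = Bop_symbol L m * shift_prod k m.
Proof.
elim: k => [|k IH]; first by rewrite !addn0 /shift_prod big_geq // mulr1.
have Bop_symbolS L' m' : Bop_symbol L'.+1 m'.+1 = (1 - hbar * m'%:R) * Bop_symbol L' m'.
  rewrite /Bop_symbol /= big_cons (iotaDl 1 1 L') big_map.
  congr (_ * _); first by rewrite -addn1 natrD; ring.
  by apply: eq_bigr => j _; rewrite -addn1 !natrD; ring.
by rewrite !addnS Bop_symbolS IH /shift_prod big_nat_recr //=; ring.
Qed.

Definition psi_weight (m : nat) : R := \prod_(1 <= l < m.+1) (1 - hbar * (l.-1)%:R)^-1.

Hypothesis hbar_gen : forall m : nat, 1 - hbar * m%:R != 0.

Lemma psi_weightD m k : psi_weight (m + k) * shift_prod k m = psi_weight m.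
Proof.
elim: k => [|k IH]; first by rewrite addn0 /shift_prod big_geq // mulr1.
rewrite addnS /psi_weight big_nat_recr //= -/(psi_weight (m + k)).
rewrite /shift_prod big_nat_recr //= -/(shift_prod k m).
by rewrite mulrACA IH mulVf ?mulr1.
Qed.

Lemma shift_prod_neq0 k m : shift_prod k m != 0.
Proof. by rewrite prodf_seq_neq0; apply/allP => j _; exact: hbar_gen. Qed.

End Operators.

Section WeightedSeries.
Variables (R : fieldType) (hbar : R) (t : nat -> R) (s : nat -> R).
Hypothesis hbar_gen : forall m : nat, 1 - hbar * m%:R != 0.

Let F : series R := fun m => s m * psi_weight hbar m.
Let defect (n : nat) : R :=
  \sum_(1 <= k < n.+1) (k%:R * t k) * s (n - k)%N - hbar * (n%:R * s n).

Lemma A_mm_weighted n : A_mm hbar t F n = psi_weight hbar n * defect n.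
Proof.
rewrite /A_mm /fD /mulXn /defect mulrBr mulr_sumr.
congr (_ - _); last by rewrite /F; ring.
apply: eq_big_nat => k /andP[_]; rewrite ltnS => le_kn; rewrite le_kn.
rewrite prodfV -/(shift_prod hbar k (n - k)) /F -(psi_weightD hbar_gen (n - k) k) subnK //.
by field; exact: shift_prod_neq0.
Qed.

Lemma Atilde_mm_weighted l : (forall k, (l < k)%N -> t k = 0) ->
  forall n, Atilde_mm hbar t l F n = Bop_symbol hbar l n * psi_weight hbar n * defect n.
Proof.
move=> t_gt n; pose G k := if (k <= n)%N then k%:R * t k * s (n - k)%N else 0.
have sumG : \sum_(1 <= k < l.+1) G k = \sum_(1 <= k < n.+1) k%:R * t k * s (n - k)%N.
  rewrite (big_nat_widen_vanishing (leq_addr n l)) => [|k lt_lk]; last first.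
    by rewrite /G t_gt // mulr0 mul0r if_same.
  rewrite -(big_nat_widen_vanishing (leq_addl l n)) => [|k lt_nk]; last first.
    by rewrite /G leqNgt lt_nk.
  by apply: eq_big_nat => k /andP[_]; rewrite ltnS /G => ->.
rewrite /Atilde_mm xhat_yhatE opprod_BopE /defect -sumG mulrBr mulr_sumr.
congr (_ + _); last by rewrite /F; ring.
apply: eq_big_nat => k /andP[_]; rewrite ltnS => le_kl.
rewrite iter_xhatE opprod_BopE /G; case: ifP => le_kn; last by rewrite !mulr0.
have := Bop_symbolD hbar (l - k) (n - k) k; rewrite !subnK // => ->.
by rewrite /F -(psi_weightD hbar_gen (n - k) k) subnK //; ring.
Qed.

End WeightedSeries.

Theorem mainTheorem6 (R : fieldType) (hbar : R) (t : nat -> R)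
  (Rchar0 : [pchar R] =i pred0)
  (hbar_neq0 : hbar != 0)
  (hbar_gen : forall m : nat, 1 - hbar * m%:R != 0) :
  (forall n : nat, A_mm hbar t (Psi_mm hbar t) n = 0) /\
  (forall l : nat, (forall k : nat, (l < k)%N -> t k = 0) ->
     forall n : nat, Atilde_mm hbar t l (Psi_mm hbar t) n = 0).
Proof.
pose s := schur_row (fun m => t m / hbar).
have defect0 n : \sum_(1 <= k < n.+1) (k%:R * t k) * s (n - k)%N = hbar * (n%:R * s n).
  rewrite /s (schur_row_rec Rchar0) mulr_sumr; by apply: eq_bigr => k _; field.
split=> [n | l t_gt n].
  by rewrite (A_mm_weighted t s hbar_gen) defect0 subrr mulr0.
by rewrite (Atilde_mm_weighted s hbar_gen t_gt) defect0 subrr mulr0.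
Qed.
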